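(* Let $\beta\in\mathbb{R}\setminus\{0\}$ and let $\Gamma$ be a lattice in $\operatorname{PSL}(2,\mathbb{R})$ such that the stabilizer of $\infty$ in $\Gamma$ is $\Gamma_\infty=\{\pm\begin{pmatrix}1&k\\0&1\end{pmatrix}: k\in\mathbb{Z}\}$ and the stabilizer of $0$ in $\Gamma$ is $\Gamma_0=\{\pm\begin{pmatrix}1&0\\k\beta^2&1\end{pmatrix}: k\in\mathbb{Z}\}$ (acting by Möbius transformations). If $\mathrm{Tr}(\Gamma)$ has linear growth, then $A^2\in\operatorname{PSL}(2,\mathbb{Q})$ for every $A\in\Gamma$.
   Context: $\mathrm{Tr}(\Gamma)$ is the set of traces of all matrices in $\operatorname{SL}(2,\mathbb{R})$ projecting to elements of $\Gamma$ (so traces are taken up to sign). A set $A\subset\mathbb{R}$ has linear growth if there are constants $C,D>0$ with $\#\{a\in A: |a|\le n\}\le Cn+D$ for all $n$. $A^2\in\operatorname{PSL}(2,\mathbb{Q})$ means $A^2$ has a matrix representative with rational entries. *)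

From HB Require Import structures.
From mathcomp Require Import all_boot all_order all_algebra.
From mathcomp Require Import all_classical all_reals all_analysis.
Set Implicit Arguments. Unset Strict Implicit. Unset Printing Implicit Defensive.
Import Order.TTheory GRing.Theory Num.Theory.
Local Open Scope classical_set_scope.
Local Open Scope ring_scope.

(* A subgroup of PSL(2,R) is represented by its full preimage in SL(2,R):
   a set of 2x2 real matrices of determinant 1, containing 1, closed under
   product, inverse and negation (the sign ambiguity). *)
Definition psl2_subgroup (R : realType) (G : set 'M[R]_2) : Prop :=
  [/\ (forall g, G g -> \det g = 1),
      G 1%:M,
      (forall g h, G g -> G h -> G (g *m h)),
      (forall g, G g -> G (invmx g)) &
      (forall g, G g -> G (- g))].

Definition uhp (R : realType) : set (R * R) := [set z | 0 < z.2].

(* Moebius action z |-> (a z + b)/(c z + d) in real coordinates. *)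
Definition mobius (R : realType) (g : 'M[R]_2) (z : R * R) : R * R :=
  let a := g 0 0 in let b := g 0 1 in let c := g 1 0 in let d := g 1 1 in
  let x := z.1 in let y := z.2 in
  let den := (c * x + d) ^+ 2 + (c * y) ^+ 2 in
  (((a * x + b) * (c * x + d) + a * c * y ^+ 2) / den, y / den).

Definition leb2 (R : realType) :=
  ((@lebesgue_measure R) \x (@lebesgue_measure R))%E.

Definition hyp_area (R : realType) (F : set (R * R)) : \bar R :=
  (\int[@leb2 R]_(z in F) ((z.2 ^- 2)%:E))%E.

Definition discrete_sub (R : realType) (G : set 'M[R]_2) : Prop :=
  exists2 e : R, 0 < e &
    forall g, G g -> (forall i j, `|g i j - (1%:M : 'M[R]_2) i j| < e) -> g = 1%:M.

(* Lattice: discrete subgroup of PSL(2,R) with finite covolume, i.e. admitting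
   a measurable fundamental domain for its action on the upper half plane of
   finite hyperbolic area. *)
Definition psl2_lattice (R : realType) (G : set 'M[R]_2) : Prop :=
  [/\ psl2_subgroup G, discrete_sub G &
    exists F : set (R * R),
      [/\ measurable F, F `<=` @uhp R,
          (forall z, @uhp R z -> exists2 g, G g & F (mobius g z)),
          (forall g, G g -> g <> 1%:M -> g <> - 1%:M ->
             (@leb2 R).-negligible (F `&` (mobius g @^-1` F))) &
          (hyp_area F < +oo)%E]].

(* Tr(G): traces of all matrices in G (both signs, as G is closed under -). *)
Definition trace_set (R : realType) (G : set 'M[R]_2) : set R :=
  [set t | exists2 g, G g & t = \tr g].

(* Linear growth: #{a in A : |a| <= n} <= C n + D for all n (every finite
   family of distinct such a has at most C n + D elements). *)
Definition linear_growth (R : realType) (A : set R) : Prop :=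
  exists C D : R, [/\ 0 < C, 0 < D &
    forall (n : nat) (s : seq R), uniq s ->
      (forall a, a \in s -> A a /\ `|a| <= n%:R) ->
      (size s)%:R <= C * n%:R + D].

Definition is_rational (R : realType) (x : R) : Prop := exists q : rat, x = ratr q.

Definition unip_upper (R : realType) (k : int) : 'M[R]_2 :=
  \matrix_(i < 2, j < 2) (if (i == 0) && (j == 1) then k%:~R
                          else if i == j then 1 else 0).
Definition unip_lower (R : realType) (x : R) : 'M[R]_2 :=
  \matrix_(i < 2, j < 2) (if (i == 1) && (j == 0) then x
                          else if i == j then 1 else 0).

(* For A = [[a, b], [c, d]] in Gamma and the parabolic generators U = [[1, 1], [0, 1]]
   and L = [[1, 0], [beta^2, 1]], the traces of A U^k L^m form the bilinear family
   tr A + k c + m beta^2 b + k m beta^2 a.  For fixed m, the terms with k <= n/m are an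
   arithmetic progression of O(n) values with step c + m beta^2 a.  If c / (beta^2 a)
   were irrational, two of these progressions would share at most one term, and the
   progressions for m <= M would produce about n log M distinct traces of size O(n),
   against linear growth.  So c / (beta^2 a) and, exchanging k and m, b / a are
   rational; the same holds with d in place of a (use A L^m U^k).  Applied to U L this
   makes beta^2 rational, hence every A with b c <> 0 and (a, d) <> (0, 0) is a real
   multiple of a rational matrix, and det A = 1 makes A^2 rational.  Elements with
   b c = 0 lie in a cusp stabilizer, and a = d = 0 gives A^2 = -1. *)

From HB Require Import structures.
From mathcomp Require Import all_boot all_order all_algebra.
From mathcomp Require Import all_classical all_reals all_analysis.
From mathcomp Require Import ring lra zify.
Set Implicit Arguments.
Unset Strict Implicit.
Unset Printing Implicit Defensive.

Import Order.TTheory GRing.Theory Num.Theory.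
Local Open Scope classical_set_scope.
Local Open Scope ring_scope.

Section Rationals.
Context {R : realType}.

Definition rational_subdef (x : R) : bool := `[< is_rational x >].
Definition rational : qualifier 0 R := [qualify x : R | rational_subdef x].

Lemma rationalP (x : R) : reflect (is_rational x) (x \is rational).
Proof. exact: asboolP. Qed.

Fact rational_divring_closed : divring_closed rational.
Proof.
split; first by apply/rationalP; exists 1; rewrite rmorph1.
  move=> _ _ /rationalP[a ->] /rationalP[b ->].
  by apply/rationalP; exists (a - b); rewrite rmorphB.
move=> _ _ /rationalP[a ->] /rationalP[b ->].
by apply/rationalP; exists (a / b); rewrite fmorph_div.
Qed.

HB.instance Definition _ :=
  GRing.isDivringClosed.Build R rational_subdef rational_divring_closed.

End Rationals.

Lemma linear_growth_bound (R : realType) (T : set R) : linear_growth T ->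
  exists C D : R, forall (x : R) (s : seq R), 0 <= x -> uniq s ->
    (forall a, a \in s -> T a /\ `|a| <= x) -> (size s)%:R <= C * x + D.
Proof.
move=> [C [D [C0 _ growth]]]; exists C, (C + D) => x s x0 us sT.
have xlt : x < (Num.truncn x).+1%:R := truncnS_gt x.
have xge : (Num.truncn x)%:R <= x by rewrite truncn_le.
apply: (le_trans (growth (Num.truncn x).+1 s us _)).
  by move=> a /sT[Ta ax]; split; rewrite // (le_trans ax) ?ltW.
have := ler_wpM2l (ltW C0) xge; rewrite -natr1; lra.
Qed.

Lemma count_le1 (T : eqType) (P : pred T) (s : seq T) : uniq s ->
  {in s &, forall x y, P x -> P y -> x = y} -> (count P s <= 1)%N.
Proof.
move=> us Puniq; rewrite -size_filter.
have : {in [seq x <- s | P x] &, forall x y, x = y}.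
  by move=> x y; rewrite !mem_filter => /andP[Px xs] /andP[Py ys]; apply: Puniq.
case: [seq x <- s | P x] (filter_uniq P us) => [|x [|y t]] //= /andP[+ _].
rewrite inE negb_or => /andP[xy _] /(_ x y).
by rewrite !inE !eqxx orbT => /(_ isT isT) /eqP; rewrite (negbTE xy).
Qed.

Lemma size_undup_cat (T : eqType) (s t : seq T) : uniq s ->
  (size (undup (s ++ t)) + count (mem t) s = size s + size (undup t))%N.
Proof.
move=> us; rewrite undup_cat size_cat size_filter (undup_id us).
by rewrite -(count_predC (mem t) s) addnAC; congr (_ + _); apply: addnC.
Qed.

Lemma count_mem_flatten (T : eqType) (s : seq T) (ss : seq (seq T)) :
  (count (mem (flatten ss)) s <= sumn [seq count (mem t) s | t <- ss])%N.
Proof.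
elim: ss => [|t ss IH] /=; first by rewrite count_pred0.
rewrite (leq_trans _ (leq_add (leqnn _) IH)) // -count_predUI.
rewrite (@eq_count _ _ (predU (mem t) (mem (flatten ss)))) ?leq_addr // => x.
by rewrite /= mem_cat.
Qed.

Lemma sumn_size_le_undup_flatten (I T : eqType) (f : I -> seq T) (r : seq I) :
  uniq r -> {in r, forall i, uniq (f i)} ->
  {in r &, forall i j, i != j -> count (mem (f j)) (f i) <= 1}%N ->
  (sumn [seq size (f i) | i <- r] <=
     size (undup (flatten [seq f i | i <- r])) + size r ^ 2)%N.
Proof.
elim: r => [//|i r IH] /= /andP[ir ur] uf cf.
have ri : {subset r <= i :: r} by move=> j jr; rewrite inE jr orbT.
have := size_undup_cat (flatten [seq f j | j <- r]) (uf i (mem_head _ _)).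
have := count_mem_flatten (f i) [seq f j | j <- r].
have : (sumn [seq count (mem t) (f i) | t <- [seq f j | j <- r]] <= size r)%N.
  rewrite -map_comp sumnE big_map big_seq -sum1_size [X in (_ <= X)%N]big_seq.
  apply: leq_sum => j jr /=; apply: cf; rewrite ?mem_head ?ri //.
  by apply: contraNneq ir => ->.
have := IH ur (sub_in1 ri uf) (sub_in2 ri cf).
lia.
Qed.

Lemma harmonic_exp2_ge (R : numFieldType) (L : nat) :
  L%:R / 2 <= \sum_(1 <= m < (2 ^ L).+1) (m%:R : R)^-1.
Proof.
elim: L => [|L IH]; first by rewrite mul0r sumr_ge0 // => m _; rewrite invr_ge0.
rewrite (big_cat_nat _ (n := (2 ^ L).+1)) //=; last by rewrite ltnS leq_pexp2l.
have block : 2^-1 <= \sum_((2 ^ L).+1 <= m < (2 ^ L.+1).+1) (m%:R : R)^-1.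
  apply: (@le_trans _ _ (\sum_((2 ^ L).+1 <= m < (2 ^ L.+1).+1) (2 ^ L.+1)%:R^-1)).
    rewrite sumr_const_nat subSS expnS mul2n -addnn addnK -[_ *+ 2 ^ L]mulr_natr natrD.
    suff -> : ((2 ^ L)%:R + (2 ^ L)%:R)^-1 * (2 ^ L)%:R = 2^-1 :> R by [].
    by field; rewrite -natrD pnatr_eq0 addn_eq0 expn_eq0.
  apply: ler_sum_nat => m /andP[lo hi].
  by rewrite lef_pV2 ?qualifE/= ?ler_nat ?ltr0n ?expn_gt0 //; lia.
by rewrite -[L.+1%:R]natr1 mulrDl mul1r lerD.
Qed.

Lemma rational_ratio_of_proportional_shifts (R : realType) (u w q : R) (m m' : nat) :
  w != 0 -> q \is rational -> m != m' ->
  u + m%:R * w = q * (u + m'%:R * w) -> u / w \is rational.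
Proof.
move=> w0 qQ mm' e.
have q1 : 1 - q != 0.
  rewrite subr_eq0; apply: contraNneq mm' => q1.
  by move: e; rewrite -q1 mul1r => /addrI/(mulIf w0)/eqP; rewrite eqr_nat.
have -> : u / w = (q * m'%:R - m%:R) / (1 - q).
  apply/eqP; rewrite eqr_div //; apply/eqP.
  transitivity (u + m%:R * w - q * (u + m'%:R * w) + (q * m'%:R - m%:R) * w); first ring.
  by rewrite e subrr add0r.
by rewrite rpredM ?rpredV ?rpredB ?rpredM ?rpred_nat ?rpred1.
Qed.

Section BilinearGrowth.
Variables (R : realType) (p u v w : R).
Hypotheses (w_neq0 : w != 0) (uw_irr : u / w \isn't rational).

Let step (m : nat) := u + m%:R * w.

Let progression (n m : nat) :=
  [seq p + m%:R * v + k%:R * step m | k <- iota 0 (n %/ m).+1].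

Lemma step_neq0 m : step m != 0.
Proof.
apply: contra uw_irr; rewrite /step => /eqP um0.
have -> : u = - (m%:R * w) by apply/eqP; rewrite -addr_eq0 um0.
by rewrite mulNr mulfK // rpredN rpred_nat.
Qed.

Lemma progression_uniq n m : uniq (progression n m).
Proof.
rewrite map_inj_uniq ?iota_uniq // => k1 k2 /addrI/(mulIf (step_neq0 m))/eqP.
by rewrite eqr_nat => /eqP.
Qed.

Lemma progression_meet_le1 n m m' :
  m != m' -> (count (mem (progression n m')) (progression n m) <= 1)%N.
Proof.
move=> mm'; apply: count_le1 (progression_uniq n m) _.
move=> _ _ /mapP[k1 _ ->] /mapP[k2 _ ->] /mapP[k1' _ e1] /mapP[k2' _ e2].
suff -> : k1 = k2 by [].
apply/eqP; apply: contraT => k12; case/negP: uw_irr.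
have k0 : k1%:R - k2%:R != 0 :> R by rewrite subr_eq0 eqr_nat.
apply: (rational_ratio_of_proportional_shifts
          (q := (k1'%:R - k2'%:R) / (k1%:R - k2%:R)) w_neq0 _ mm').
  by rewrite rpredM ?rpredV ?rpredB ?rpred_nat.
apply: (mulfI k0); rewrite mulrA [_ * (_ / _)]mulrC divfK //.
rewrite /step in e1 e2 *; lra.
Qed.

Lemma progression_norm_le n m M a : (m <= M)%N -> a \in progression n m ->
  `|a| <= `|p| + M%:R * `|v| + n%:R * (`|u| + `|w|).
Proof.
move=> mM /mapP[k]; rewrite mem_iota add0n ltnS => km ->.
have kn : (k <= n)%N by apply: leq_trans km (leq_div n m).
have kmn : (k * m <= n)%N.
  by apply: leq_trans (leq_mul km (leqnn m)) (leq_trunc_div n m).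
have t1 := ler_normD (p + m%:R * v) (k%:R * step m).
have t2 := ler_normD p (m%:R * v).
have t3 := ler_wpM2l (ler0n _ k) (ler_normD u (m%:R * w)).
have b1 : m%:R * `|v| <= M%:R * `|v| by rewrite ler_wpM2r // ler_nat.
have b2 : k%:R * `|u| <= n%:R * `|u| by rewrite ler_wpM2r // ler_nat.
have b3 : (k * m)%:R * `|w| <= n%:R * `|w| by rewrite ler_wpM2r // ler_nat.
rewrite /step !normrM !normr_nat natrM in t1 t2 t3 b3 *; lra.
Qed.

Lemma size_progressions_ge n L :
  n%:R * (L%:R / 2) <=
  (size (undup (flatten [seq progression n m | m <- iota 1 (2 ^ L)])))%:R
    + ((2 ^ L) ^ 2)%:R :> R.
Proof.
have := sumn_size_le_undup_flatten (iota_uniq 1 (2 ^ L))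
  (fun m _ => progression_uniq n m) (fun m m' _ _ => @progression_meet_le1 n m m').
rewrite size_iota -(ler_nat R) natrD => /(le_trans _); apply.
apply: (le_trans (ler_wpM2l (ler0n _ n) (harmonic_exp2_ge R L))).
rewrite sumnE big_map natr_sum mulr_sumr /index_iota subSS subn0.
apply: ler_sum => -[|m] _; rewrite size_map size_iota; first by rewrite invr0 mulr0.
by rewrite ler_pdivrMr ?ltr0Sn // -natrM ler_nat ltnW // ltn_ceil.
Qed.

Lemma bilinear_growth_contra (T : set R) : linear_growth T ->
  ~ (forall k m : nat, T (p + k%:R * u + m%:R * v + k%:R * m%:R * w)).
Proof.
move=> /linear_growth_bound[C [D growth]] inT.
(* L makes the n L / 2 lower bound outgrow the slope C W of the upper bound; n then
   absorbs the constant C P + D and the M^2 possible coincidences. *)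
pose W := `|u| + `|w|; pose L := (Num.truncn (2 * (C * W + 1))).+1.
pose M := (2 ^ L)%N; pose P := `|p| + M%:R * `|v|.
pose n := (Num.truncn (C * P + D + (M ^ 2)%:R)).+1.
have hL : 2 * (C * W + 1) < L%:R := truncnS_gt _.
have hn : C * P + D + (M ^ 2)%:R < n%:R := truncnS_gt _.
have hLn : n%:R * (C * W + 1) <= n%:R * (L%:R / 2).
  by rewrite ler_wpM2l // ler_pdivlMr //; lra.
pose s := undup (flatten [seq progression n m | m <- iota 1 M]).
have : (size s)%:R <= C * (P + n%:R * W) + D.
  apply: growth; [by rewrite addr_ge0 ?mulr_ge0 ?addr_ge0 | exact: undup_uniq |].
  move=> a; rewrite mem_undup => /flatten_mapP[m]; rewrite mem_iota => /andP[_ mM] am.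
  split; last by apply: progression_norm_le am; lia.
  by case/mapP: am => k _ ->; have := inT k m; congr T; rewrite /step; ring.
have := size_progressions_ge n L; rewrite -/M -/s; lra.
Qed.

End BilinearGrowth.

Lemma bilinear_growth_rational (R : realType) (T : set R) (p u v w : R) :
  linear_growth T -> w != 0 ->
  (forall k m : nat, T (p + k%:R * u + m%:R * v + k%:R * m%:R * w)) ->
  u / w \is rational /\ v / w \is rational.
Proof.
move=> growth w0 inT; split; apply/negPn/negP => irr.
  exact: (bilinear_growth_contra (p := p) (v := v) w0 irr growth inT).
apply: (bilinear_growth_contra (p := p) (v := u) w0 irr growth) => k m.
by have := inT m k; congr T; ring.
Qed.

Section Mx22.
Variable R : comNzRingType.
Implicit Types A B : 'M[R]_2.

Fact lift_ord2 (i : 'I_2) (j : 'I_1) : lift i j = if i == 0 then 1 else 0.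
Proof. by apply/val_inj; case: i j => [[|[]]] // ? [[]]. Qed.

Lemma mulmx22E A B i j : (A *m B) i j = A i 0 * B 0 j + A i 1 * B 1 j.
Proof. by rewrite mxE !big_ord_recl big_ord0 addr0 lift_ord2. Qed.

Lemma mxtrace22 A : \tr A = A 0 0 + A 1 1.
Proof. by rewrite /mxtrace !big_ord_recl big_ord0 addr0 lift_ord2. Qed.

Lemma det_mx22 A : \det A = A 0 0 * A 1 1 - A 0 1 * A 1 0.
Proof.
rewrite (expand_det_row A 0) !big_ord_recl big_ord0 addr0 /cofactor !det_mx11 !mxE /=.
by rewrite !lift_ord2 /= expr0 expr1 mul1r mulN1r mulrN.
Qed.

Fact ord2P (i : 'I_2) : i = 0 \/ i = 1.
Proof. by case: i => [[|[|//]]] ?; [left | right]; apply/val_inj. Qed.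

Lemma mulmx22_Cayley_Hamilton A : A *m A = \tr A *: A - (\det A)%:M.
Proof.
apply/matrixP => i j; rewrite mulmx22E !mxE mxtrace22 det_mx22.
by case: (ord2P i) (ord2P j) => -> [] -> /=; ring.
Qed.

End Mx22.

Lemma mxtrace_mul_unip_upper_lower (R : realType) (A : 'M[R]_2) (k : int) (x : R) :
  \tr (A *m unip_upper R k *m unip_lower x) =
  \tr A + k%:~R * A 1 0 + x * A 0 1 + k%:~R * x * A 0 0.
Proof. by rewrite !mxtrace22 !mulmx22E !mxE /=; ring. Qed.

Lemma mxtrace_mul_unip_lower_upper (R : realType) (A : 'M[R]_2) (k : int) (x : R) :
  \tr (A *m unip_lower x *m unip_upper R k) =
  \tr A + k%:~R * A 1 0 + x * A 0 1 + k%:~R * x * A 1 1.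
Proof. by rewrite !mxtrace22 !mulmx22E !mxE /=; ring. Qed.

Lemma scaled_sqr_mxOver_rational (R : realType) (A B : 'M[R]_2) (l : R) :
  \det A = 1 -> A = l *: B -> B \is a mxOver rational ->
  A *m A \is a mxOver rational.
Proof.
move=> detA AE BQ.
have detBQ : \det B \is rational by rewrite det_mx22 rpredB ?rpredM ?(mxOverP BQ).
have detB : l ^+ 2 * \det B = 1 by rewrite -detZ -AE.
have detB0 : \det B != 0.
  by apply: contra_neq (oner_neq0 R) => d0; rewrite -detB d0 mulr0.
rewrite AE -scalemxAl -scalemxAr scalerA -expr2 -[l ^+ 2](mulfK detB0) detB mul1r.
by apply: mxOverZ; rewrite ?rpredV //; apply: mxOverM.
Qed.

Lemma unip_upper_mxOver_rational (R : realType) (k : int) :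
  unip_upper R k \is a mxOver rational.
Proof.
by apply/mxOverP => i j; rewrite mxE; do 2?case: ifP => _; rewrite ?(rpred_int, rpred0, rpred1).
Qed.

Lemma unip_lower_mxOver_rational (R : realType) (x : R) :
  x \is rational -> unip_lower x \is a mxOver rational.
Proof.
by move=> xQ; apply/mxOverP => i j; rewrite mxE; do 2?case: ifP => _; rewrite ?(rpred0, rpred1).
Qed.

Section CuspStabilizers.
Variables (R : realType) (beta : R) (G : set 'M[R]_2).
Hypotheses (beta_neq0 : beta != 0)
  (det_G : forall g, G g -> \det g = 1)
  (mul_G : forall g h, G g -> G h -> G (g *m h))
  (stab_oo : forall g, G g /\ g 1 0 = 0 <->
     exists k : int, g = unip_upper R k \/ g = - unip_upper R k)
  (stab_0 : forall g, G g /\ g 0 1 = 0 <->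
     exists k : int, g = unip_lower (k%:~R * beta ^+ 2) \/
                     g = - unip_lower (k%:~R * beta ^+ 2))
  (growth : linear_growth (trace_set G)).

Lemma unip_upper_in k : G (unip_upper R k).
Proof. by have [_ [] //] := stab_oo (unip_upper R k); exists k; left. Qed.

Lemma unip_lower_in (k : int) : G (unip_lower (k%:~R * beta ^+ 2)).
Proof.
by have [_ [] //] := stab_0 (unip_lower (k%:~R * beta ^+ 2)); exists k; left.
Qed.

Lemma trace_bilinear_ratios A x : G A -> (x = A 0 0 \/ x = A 1 1) -> x != 0 ->
  A 1 0 / (beta ^+ 2 * x) \is rational /\ A 0 1 / x \is rational.
Proof.
move=> GA xad x0.
have b2x0 : beta ^+ 2 * x != 0 by rewrite mulf_neq0 ?expf_neq0.
have [] // := bilinear_growth_rational (p := \tr A) (u := A 1 0)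
                (v := beta ^+ 2 * A 0 1) growth b2x0.
  move=> k m; case: xad => ->.
    exists (A *m unip_upper R k *m unip_lower ((m%:Z)%:~R * beta ^+ 2)).
      by apply: mul_G; [apply: mul_G GA _; apply: unip_upper_in | apply: unip_lower_in].
    by rewrite mxtrace_mul_unip_upper_lower -!pmulrn; ring.
  exists (A *m unip_lower ((m%:Z)%:~R * beta ^+ 2) *m unip_upper R k).
    by apply: mul_G; [apply: mul_G GA _; apply: unip_lower_in | apply: unip_upper_in].
  by rewrite mxtrace_mul_unip_lower_upper -!pmulrn; ring.
by rewrite invfM mulrACA mulfV ?expf_neq0 // mul1r.
Qed.

Lemma beta2_rational : beta ^+ 2 \is rational.
Proof.
pose g := unip_upper R 1 *m unip_lower (1%:~R * beta ^+ 2).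
have g00 : g 0 0 = 1 + beta ^+ 2 by rewrite mulmx22E !mxE /=; ring.
have g10 : g 1 0 = beta ^+ 2 by rewrite mulmx22E !mxE /=; ring.
have g00_neq0 : g 0 0 != 0 by rewrite g00 gt_eqF // ltr_pwDl ?sqr_ge0.
have [+ _] := trace_bilinear_ratios (mul_G (unip_upper_in 1) (unip_lower_in 1))
                (or_introl erefl) g00_neq0.
rewrite g00 g10 invfM mulrA mulfV ?expf_neq0 // mul1r rpredV => h.
by rewrite -[beta ^+ 2](addKr 1) rpredD ?rpredN ?rpred1.
Qed.

Lemma offdiag_ratios A x : G A -> (x = A 0 0 \/ x = A 1 1) -> x != 0 ->
  A 1 0 / x \is rational /\ A 0 1 / x \is rational.
Proof.
move=> GA xad x0; have [cQ bQ] := trace_bilinear_ratios GA xad x0; split=> //.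
have -> : A 1 0 / x = beta ^+ 2 * (A 1 0 / (beta ^+ 2 * x)).
  by field; rewrite x0 beta_neq0.
by rewrite rpredM ?beta2_rational.
Qed.

Lemma scaled_mxOver_rational A x : G A -> A 0 1 != 0 ->
  (x = A 0 0 \/ x = A 1 1) -> x != 0 -> x^-1 *: A \is a mxOver rational.
Proof.
move=> GA b0 xad x0; have [cQ bQ] := offdiag_ratios GA xad x0.
have diagQ y : (y = A 0 0 \/ y = A 1 1) -> y / x \is rational.
  move=> yad; have [-> | y0] := eqVneq y 0; first by rewrite mul0r rpred0.
  have [_ bQ'] := offdiag_ratios GA yad y0.
  have -> : y / x = (A 0 1 / x) / (A 0 1 / y) by field; rewrite x0 y0 b0.
  by rewrite rpredM ?rpredV.
apply/mxOverP => i j; rewrite mxE mulrC.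
by case: (ord2P i) (ord2P j) => -> [] ->; rewrite // diagQ //; [left | right].
Qed.

Lemma sqr_mxOver_rational A : G A -> A *m A \is a mxOver rational.
Proof.
move=> GA.
have [c0 | c0] := eqVneq (A 1 0) 0.
  have [k [->|->]] := (stab_oo A).1 (conj GA c0);
    by rewrite ?mulNmx ?mulmxN ?opprK mxOverM ?unip_upper_mxOver_rational.
have [b0 | b0] := eqVneq (A 0 1) 0.
  have lowQ (k : int) : unip_lower (k%:~R * beta ^+ 2) \is a mxOver rational.
    by apply: unip_lower_mxOver_rational; rewrite rpredM ?rpred_int ?beta2_rational.
  have [k [->|->]] := (stab_0 A).1 (conj GA b0);
    by rewrite ?mulNmx ?mulmxN ?opprK mxOverM ?lowQ.
have [/andP[/eqP a0 /eqP d0] | ] := boolP ((A 0 0 == 0) && (A 1 1 == 0)).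
  rewrite mulmx22_Cayley_Hamilton mxtrace22 a0 d0 addr0 scale0r sub0r det_G //.
  by apply/mxOverP => i j; rewrite !mxE rpredN rpredMn ?rpred1.
rewrite negb_and => /orP xad.
have [x xA x0] : exists2 x, x = A 0 0 \/ x = A 1 1 & x != 0.
  by case: xad => ?; eexists; [left | | right |].
apply: (scaled_sqr_mxOver_rational (l := x) (det_G GA) _
          (scaled_mxOver_rational GA b0 xA x0)).
by rewrite scalerA mulfV ?scale1r.
Qed.

End CuspStabilizers.

Theorem lemma3p1 (R : realType) (beta : R) (G : set 'M[R]_2) :
  beta != 0 ->
  psl2_lattice G ->
  (* stabilizer of oo: elements with c = 0 *)
  (forall g, G g /\ g 1 0 = 0 <->
     exists k : int, g = unip_upper R k \/ g = - unip_upper R k) ->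
  (* stabilizer of 0: elements with b = 0 *)
  (forall g, G g /\ g 0 1 = 0 <->
     exists k : int, g = unip_lower (k%:~R * beta ^+ 2) \/
                     g = - unip_lower (k%:~R * beta ^+ 2)) ->
  linear_growth (trace_set G) ->
  forall A, G A -> forall i j, is_rational ((A *m A) i j).
Proof.
move=> beta0 [[det_G _ mul_G _ _] _ _] stab_oo stab_0 growth A GA i j.
apply/rationalP; move: i j; apply/mxOverP.
exact: sqr_mxOver_rational beta0 det_G mul_G stab_oo stab_0 growth A GA.
Qed.
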